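(* Let $F_1,F_2$ be continuous cumulative distribution functions of nonnegative random variables with the same finite mean $\mu>0$, each strictly increasing on the set where it lies strictly between $0$ and $1$, with Lorenz curves $LC_1,LC_2$. Suppose $LC_1(p)\ge LC_2(p)$ for all $p\in[0,1]$. Let $m>1$ and $0<r<m\mu$, and for $i=1,2$ let $\tau_i$ solve $m\int_0^{\tau_i}x\,dF_i(x)=r$ and $\theta_i$ solve $\int_{\theta_i}^\infty x\,dF_i(x)=r/m$. Then $$F_1(\tau_1)\le F_2(\tau_2)\quad\text{and}\quad 1-F_1(\theta_1)\ge 1-F_2(\theta_2).$$ Consequently the sets $\{m>1: 1/m<1-F_i(\theta_i)\}$ and $\{m>1: 1/m>F_i(\tau_i)\}$ (with $r,\mu$ fixed and $\tau_i,\theta_i$ depending on $m$) are each larger (in the sense of inclusion) for $i=1$ than for $i=2$.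
   Context: The Lorenz curve of a distribution $F$ with mean $\mu$ is $LC(p)=\frac{1}{\mu}\int_0^p F^{-1}(t)\,dt$, $p\in[0,1]$, with $F^{-1}$ the quantile function. Interpretation: $1/m<1-F(\theta)$ means the strongest-first society can survive (hence every society form can), and $1/m>F(\tau)$ means the weakest-first society dies out almost surely (hence every society form does), in the resource dependent branching process model with mean offspring $m$ and mean individual production $r$. *)

From Stdlib Require Import Reals Lra.
Open Scope R_scope.

Fixpoint sum_upto (g : nat -> R) (n : nat) : R :=
  match n with
  | O => 0
  | S k => sum_upto g k + g k
  end.

Definition tagged_partition (a b : R) (n : nat) (x xi : nat -> R) : Prop :=
  x O = a /\ x n = b /\
  (forall i, (i < n)%nat -> x i < x (S i)) /\
  (forall i, (i < n)%nat -> x i <= xi i <= x (S i)).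

Definition mesh_lt (n : nat) (x : nat -> R) (delta : R) : Prop :=
  forall i, (i < n)%nat -> x (S i) - x i < delta.

Definition RS_sum (f G : R -> R) (n : nat) (x xi : nat -> R) : R :=
  sum_upto (fun i => f (xi i) * (G (x (S i)) - G (x i))) n.

Definition RS_int (f G : R -> R) (a b I : R) : Prop :=
  a <= b /\
  forall eps, eps > 0 -> exists delta, delta > 0 /\
    forall n x xi, tagged_partition a b n x xi -> mesh_lt n x delta ->
      Rabs (RS_sum f G n x xi - I) < eps.

Definition RS_int_infty (f G : R -> R) (a J : R) : Prop :=
  exists Ib : R -> R,
    (forall b, a <= b -> RS_int f G a b (Ib b)) /\
    (forall eps, eps > 0 -> exists M, forall b, b >= M -> a <= b ->
        Rabs (Ib b - J) < eps).

Definition cont_cdf_nonneg (F : R -> R) : Prop :=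
  (forall x y, x <= y -> F x <= F y) /\
  (forall x, continuity_pt F x) /\
  (forall x, x < 0 -> F x = 0) /\
  (forall eps, eps > 0 -> exists M, forall x, x >= M -> Rabs (F x - 1) < eps).

Definition strict_incr_on_interior (F : R -> R) : Prop :=
  forall x y, x < y -> 0 < F x < 1 -> 0 < F y < 1 -> F x < F y.

Definition is_glb (E : R -> Prop) (m : R) : Prop :=
  (forall x, E x -> m <= x) /\ (forall b, (forall x, E x -> b <= x) -> b <= m).

Definition is_quantile (F Q : R -> R) : Prop :=
  forall t, 0 < t < 1 -> is_glb (fun x => t <= F x) (Q t).

(* LC is the Lorenz curve of F (mean mu) on [0,1]:
   LC p = (1/mu) int_0^p F^{-1}(t) dt, the integral being proper for p < 1
   and improper (limit p -> 1^-) at p = 1. *)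
Definition is_Lorenz_curve (F : R -> R) (mu : R) (LC : R -> R) : Prop :=
  forall Q, is_quantile F Q ->
    (forall p, 0 <= p < 1 -> RS_int Q (fun t => t) 0 p (mu * LC p)) /\
    (forall eps, eps > 0 -> exists delta, delta > 0 /\
        forall p, 1 - delta < p < 1 -> Rabs (LC p - LC 1) < eps).

(* The substitution t = F x turns the Lorenz integral into a truncated mean:
   for a continuous cdf that is strictly increasing where 0 < F < 1,
   int_0^{F tau} F^{-1}(t) dt = int_0^tau x dF(x), proved by matching a
   Riemann sum for the right-hand side with the Riemann sum of F^{-1} over the
   image partition.  Hence mu LC_i(F_i tau_i) = r/m and
   mu LC_i(F_i theta_i) = mu - r/m.  Since F_2^{-1} > 0 on (0,1), mu LC_2 is
   strictly increasing there, so LC_1 >= LC_2 forces LC_1 to reach a given level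
   no later than LC_2 does: F_1 tau_1 <= F_2 tau_2 and F_1 theta_1 <= F_2 theta_2. *)

From Stdlib Require Import Reals Lra Lia Rtopology ClassicalEpsilon.
Open Scope R_scope.

Lemma sum_upto_ext g h n :
  (forall i, (i < n)%nat -> g i = h i) -> sum_upto g n = sum_upto h n.
Proof.
  induction n as [|n IH]; intros H; simpl; [reflexivity|].
  rewrite IH by (intros; apply H; lia). rewrite H by lia. reflexivity.
Qed.

Lemma sum_upto_app g n1 n2 :
  sum_upto g (n1 + n2) = sum_upto g n1 + sum_upto (fun k => g (n1 + k)%nat) n2.
Proof.
  induction n2 as [|n2 IH]; simpl.
  - rewrite Nat.add_0_r; lra.
  - rewrite Nat.add_succ_r; simpl; rewrite IH; lra.
Qed.

Lemma sum_upto_eq0 g n : (forall i, (i < n)%nat -> g i = 0) -> sum_upto g n = 0.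
Proof.
  induction n as [|n IH]; intros H; simpl; [reflexivity|].
  rewrite IH by (intros; apply H; lia). rewrite H by lia. lra.
Qed.

Lemma sum_upto_le g h n :
  (forall i, (i < n)%nat -> g i <= h i) -> sum_upto g n <= sum_upto h n.
Proof.
  induction n as [|n IH]; intros H; simpl; [lra|].
  assert (sum_upto g n <= sum_upto h n) by (apply IH; intros; apply H; lia).
  assert (g n <= h n) by (apply H; lia). lra.
Qed.

Lemma sum_upto_telescope x n : sum_upto (fun i => x (S i) - x i) n = x n - x O.
Proof. induction n as [|n IH]; simpl; [lra|]. rewrite IH; lra. Qed.

Lemma sum_upto_scal c g n : sum_upto (fun i => c * g i) n = c * sum_upto g n.
Proof. induction n as [|n IH]; simpl; [lra|]. rewrite IH; lra. Qed.

Lemma eq_of_forall_dist_lt A B : (forall eps, eps > 0 -> Rabs (A - B) < eps) -> A = B.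
Proof.
  intros H. destruct (Req_dec A B) as [|HAB]; [assumption|].
  assert (Hpos : Rabs (A - B) > 0) by (apply Rabs_pos_lt; lra).
  specialize (H _ Hpos). lra.
Qed.

Section Partitions.
Variables (a b : R) (n : nat) (x xi : nat -> R).
Hypothesis HP : tagged_partition a b n x xi.

Lemma partition_increasing i j : (i < j)%nat -> (j <= n)%nat -> x i < x j.
Proof.
  destruct HP as [_ [_ [Hstep _]]].
  induction 1 as [|j Hij IH]; intros Hj.
  - apply Hstep; lia.
  - apply Rlt_trans with (x j); [apply IH; lia | apply Hstep; lia].
Qed.

Lemma partition_bounds i : (i <= n)%nat -> a <= x i <= b.
Proof.
  intros Hi. destruct HP as [Hx0 [Hxn _]]. split.
  - destruct (Nat.eq_dec i 0) as [->|Hi0]; [lra|].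
    pose proof (partition_increasing 0 i ltac:(lia) Hi). lra.
  - destruct (Nat.eq_dec i n) as [->|Hin]; [lra|].
    pose proof (partition_increasing i n ltac:(lia) ltac:(lia)). lra.
Qed.

End Partitions.

Lemma mesh_lt_le n x d d' : mesh_lt n x d -> d <= d' -> mesh_lt n x d'.
Proof. intros M Hd i Hi. specialize (M i Hi). lra. Qed.

Lemma fine_partition c d delta : c <= d -> delta > 0 ->
  exists n x, tagged_partition c d n x (fun i => x (S i)) /\ mesh_lt n x delta.
Proof.
  intros Hcd Hdelta. destruct (Req_dec c d) as [<-|Hne].
  { exists O, (fun _ => c). split; [|intros i Hi; lia].
    repeat split; intros; lia. }
  destruct (INR_archimed delta (d - c) Hdelta) as [N HN].
  assert (HNpos : 0 < INR N) by (destruct N; simpl in HN; [lra | apply lt_0_INR; lia]).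
  set (h := (d - c) / INR N).
  assert (Hh : 0 < h) by (unfold h; apply Rdiv_lt_0_compat; lra).
  assert (Hhdelta : h < delta).
  { unfold h. apply Rmult_lt_reg_r with (INR N); [assumption|].
    unfold Rdiv; rewrite Rmult_assoc, Rinv_l by lra. lra. }
  exists N, (fun i => c + INR i * h).
  assert (Hstep : forall i, c + INR (S i) * h - (c + INR i * h) = h)
    by (intro; rewrite S_INR; lra).
  split; [|intros i Hi; rewrite Hstep; assumption].
  repeat split; intros; try (pose proof (Hstep i); lra).
  - simpl; lra.
  - unfold h; field; lra.
Qed.

Definition concat_seq (n1 : nat) (x1 x2 : nat -> R) (k : nat) : R :=
  if Nat.ltb k n1 then x1 k else x2 (k - n1)%nat.

Lemma concat_partition f G a c b n1 x1 xi1 n2 x2 xi2 delta :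
  tagged_partition a c n1 x1 xi1 -> tagged_partition c b n2 x2 xi2 ->
  mesh_lt n1 x1 delta -> mesh_lt n2 x2 delta ->
  tagged_partition a b (n1 + n2) (concat_seq n1 x1 x2) (concat_seq n1 xi1 xi2) /\
  mesh_lt (n1 + n2) (concat_seq n1 x1 x2) delta /\
  RS_sum f G (n1 + n2) (concat_seq n1 x1 x2) (concat_seq n1 xi1 xi2) =
  RS_sum f G n1 x1 xi1 + RS_sum f G n2 x2 xi2.
Proof.
  intros [A0 [A1 [A2 A3]]] [B0 [B1 [B2 B3]]] M1 M2.
  assert (E1 : forall k, (k <= n1)%nat -> concat_seq n1 x1 x2 k = x1 k).
  { intros k Hk; unfold concat_seq. destruct (Nat.ltb_spec k n1); [reflexivity|].
    replace k with n1 by lia. rewrite Nat.sub_diag, B0, A1; reflexivity. }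
  assert (E2 : forall y1 y2 k, concat_seq n1 y1 y2 (n1 + k) = y2 k).
  { intros y1 y2 k; unfold concat_seq.
    destruct (Nat.ltb_spec (n1 + k) n1); [lia | f_equal; lia]. }
  assert (E3 : forall k, (k < n1)%nat -> concat_seq n1 xi1 xi2 k = xi1 k).
  { intros k Hk; unfold concat_seq. destruct (Nat.ltb_spec k n1); [reflexivity | lia]. }
  assert (Split : forall i, (i < n1 + n2)%nat ->
            (S i <= n1)%nat \/ exists k, i = (n1 + k)%nat /\ (k < n2)%nat).
  { intros i Hi. destruct (Nat.ltb_spec i n1); [left; lia | right; exists (i - n1)%nat; lia]. }
  split; [|split].
  - split; [|split; [|split]].
    + rewrite E1 by lia; assumption.
    + rewrite E2; assumption.
    + intros i Hi; destruct (Split i Hi) as [H|[k [-> Hk]]].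
      * rewrite !E1 by lia; apply A2; lia.
      * rewrite <- Nat.add_succ_r, !E2; apply B2; assumption.
    + intros i Hi; destruct (Split i Hi) as [H|[k [-> Hk]]].
      * rewrite !E1, E3 by lia; apply A3; lia.
      * rewrite <- Nat.add_succ_r, !E2; apply B3; assumption.
  - intros i Hi; destruct (Split i Hi) as [H|[k [-> Hk]]].
    + rewrite !E1 by lia; apply M1; lia.
    + rewrite <- Nat.add_succ_r, !E2; apply M2; assumption.
  - unfold RS_sum. rewrite sum_upto_app. f_equal.
    + apply sum_upto_ext; intros i Hi. rewrite !E1, E3 by lia; reflexivity.
    + apply sum_upto_ext; intros i Hi. rewrite <- Nat.add_succ_r, !E2; reflexivity.
Qed.

Lemma RS_sum_const_integrator f G c d n x xi : tagged_partition c d n x xi ->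
  (forall y, c <= y <= d -> G y = G c) -> RS_sum f G n x xi = 0.
Proof.
  intros P HG. unfold RS_sum; apply sum_upto_eq0; intros i Hi.
  rewrite (HG (x (S i))), (HG (x i)) by (apply (partition_bounds _ _ _ _ _ P); lia). ring.
Qed.

Lemma RS_sum_lower_bound f G a b n x xi c : tagged_partition a b n x xi ->
  (forall y z, y <= z -> G y <= G z) -> (forall t, a <= t <= b -> c <= f t) ->
  c * (G b - G a) <= RS_sum f G n x xi.
Proof.
  intros P HG Hf. pose proof P as [Hx0 [Hxn [Hstep Htag]]].
  rewrite <- Hx0, <- Hxn, <- (sum_upto_telescope (fun i => G (x i)) n), <- sum_upto_scal.
  apply sum_upto_le; intros i Hi.
  specialize (Hstep i Hi). specialize (Htag i Hi).
  pose proof (partition_bounds _ _ _ _ _ P i ltac:(lia)).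
  pose proof (partition_bounds _ _ _ _ _ P (S i) ltac:(lia)).
  apply Rmult_le_compat_r; [pose proof (HG (x i) (x (S i))); lra | apply Hf; lra].
Qed.

Lemma RS_int_eq_of_matching_sums f G a b I f' G' a' b' J :
  RS_int f G a b I -> RS_int f' G' a' b' J ->
  (forall d d', d > 0 -> d' > 0 -> exists n x xi n' x' xi',
     tagged_partition a b n x xi /\ mesh_lt n x d /\
     tagged_partition a' b' n' x' xi' /\ mesh_lt n' x' d' /\
     RS_sum f G n x xi = RS_sum f' G' n' x' xi') ->
  I = J.
Proof.
  intros [_ HI] [_ HJ] Hmatch. apply eq_of_forall_dist_lt; intros eps He.
  destruct (HI (eps/2)) as [d [Hd KI]]; [lra|].
  destruct (HJ (eps/2)) as [d' [Hd' KJ]]; [lra|].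
  destruct (Hmatch d d' Hd Hd') as [n [x [xi [n' [x' [xi' [P [M [P' [M' Hsum]]]]]]]]]].
  specialize (KI _ _ _ P M). specialize (KJ _ _ _ P' M'). rewrite Hsum in KI.
  apply Rabs_def2 in KI, KJ. apply Rabs_def1; lra.
Qed.

Lemma RS_int_unique f G a b I J : RS_int f G a b I -> RS_int f G a b J -> I = J.
Proof.
  intros HI HJ. apply (RS_int_eq_of_matching_sums _ _ _ _ _ _ _ _ _ _ HI HJ).
  intros d d' Hd Hd'.
  destruct (fine_partition a b (Rmin d d') (proj1 HI) (Rmin_pos _ _ Hd Hd')) as [n [x [P M]]].
  exists n, x, (fun i => x (S i)), n, x, (fun i => x (S i)).
  split; [exact P | split; [apply (mesh_lt_le _ _ _ _ M (Rmin_l _ _)) |]].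
  split; [exact P | split; [apply (mesh_lt_le _ _ _ _ M (Rmin_r _ _)) | reflexivity]].
Qed.

Lemma RS_int_concat_sums f G a c b I : RS_int f G a b I ->
  forall eps, eps > 0 -> exists delta, delta > 0 /\
    forall n x xi n' x' xi', tagged_partition a c n x xi -> mesh_lt n x delta ->
      tagged_partition c b n' x' xi' -> mesh_lt n' x' delta ->
      Rabs (RS_sum f G n x xi + RS_sum f G n' x' xi' - I) < eps.
Proof.
  intros [_ HI] eps He. destruct (HI eps He) as [delta [Hdelta K]].
  exists delta; split; [assumption|]. intros n x xi n' x' xi' P M P' M'.
  destruct (concat_partition f G _ _ _ _ _ _ _ _ _ _ P P' M M') as [PC [MC EC]].
  rewrite <- EC. apply K; assumption.
Qed.

Lemma RS_int_head f G a c b I J : a <= c ->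
  RS_int f G a b I -> RS_int f G c b J -> RS_int f G a c (I - J).
Proof.
  intros Hac HI [Hcb HJ]. split; [assumption|]. intros eps He.
  destruct (RS_int_concat_sums _ _ a c _ _ HI (eps/2)) as [d [Hd K]]; [lra|].
  destruct (HJ (eps/2)) as [d' [Hd' KJ]]; [lra|].
  exists (Rmin d d'); split; [apply Rmin_pos; assumption|]. intros n x xi P M.
  destruct (fine_partition c b _ Hcb (Rmin_pos _ _ Hd Hd')) as [n' [x' [P' M']]].
  specialize (K _ _ _ _ _ _ P (mesh_lt_le _ _ _ _ M (Rmin_l _ _))
                 P' (mesh_lt_le _ _ _ _ M' (Rmin_l _ _))).
  specialize (KJ _ _ _ P' (mesh_lt_le _ _ _ _ M' (Rmin_r _ _))).
  apply Rabs_def2 in K, KJ. apply Rabs_def1; lra.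
Qed.

Lemma RS_int_tail f G a c b I J : c <= b ->
  RS_int f G a b I -> RS_int f G a c J -> RS_int f G c b (I - J).
Proof.
  intros Hcb HI [Hac HJ]. split; [assumption|]. intros eps He.
  destruct (RS_int_concat_sums _ _ a c _ _ HI (eps/2)) as [d [Hd K]]; [lra|].
  destruct (HJ (eps/2)) as [d' [Hd' KJ]]; [lra|].
  exists (Rmin d d'); split; [apply Rmin_pos; assumption|]. intros n x xi P M.
  destruct (fine_partition a c _ Hac (Rmin_pos _ _ Hd Hd')) as [n' [x' [P' M']]].
  specialize (K _ _ _ _ _ _ P' (mesh_lt_le _ _ _ _ M' (Rmin_l _ _))
                 P (mesh_lt_le _ _ _ _ M (Rmin_l _ _))).
  specialize (KJ _ _ _ P' (mesh_lt_le _ _ _ _ M' (Rmin_r _ _))).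
  apply Rabs_def2 in K, KJ. apply Rabs_def1; lra.
Qed.

Lemma RS_int_const_integrator f G c d : c <= d ->
  (forall y, c <= y <= d -> G y = G c) -> RS_int f G c d 0.
Proof.
  intros Hcd HG. split; [assumption|]. intros eps He. exists 1; split; [lra|].
  intros n x xi P _. rewrite (RS_sum_const_integrator f G c d n x xi P HG).
  rewrite Rminus_0_r, Rabs_R0; assumption.
Qed.

Lemma RS_int_lower_bound f G a b I c : RS_int f G a b I ->
  (forall y z, y <= z -> G y <= G z) -> (forall t, a <= t <= b -> c <= f t) ->
  c * (G b - G a) <= I.
Proof.
  intros [Hab HI] HG Hf. destruct (Rle_lt_dec (c * (G b - G a)) I) as [|Hlt]; [assumption|].
  destruct (HI (c * (G b - G a) - I)) as [d [Hd K]]; [lra|].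
  destruct (fine_partition a b d Hab Hd) as [n [x [P M]]].
  specialize (K _ _ _ P M). pose proof (RS_sum_lower_bound f G _ _ _ _ _ c P HG Hf).
  apply Rabs_def2 in K. lra.
Qed.

Definition limit_at_infty (I : R -> R) (a L : R) : Prop :=
  forall eps, eps > 0 -> exists M, forall b, b >= M -> a <= b -> Rabs (I b - L) < eps.

Lemma limit_at_infty_shift I1 I2 a1 a2 c L1 L2 K :
  limit_at_infty I1 a1 L1 -> limit_at_infty I2 a2 L2 ->
  (forall b, b >= c -> I1 b = I2 b + K) -> L1 = L2 + K.
Proof.
  intros H1 H2 H. apply eq_of_forall_dist_lt; intros eps He.
  destruct (H1 (eps/2)) as [M1 K1]; [lra|]. destruct (H2 (eps/2)) as [M2 K2]; [lra|].
  set (b := Rmax (Rmax M1 M2) (Rmax c (Rmax a1 a2))).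
  pose proof (Rmax_l (Rmax M1 M2) (Rmax c (Rmax a1 a2))).
  pose proof (Rmax_r (Rmax M1 M2) (Rmax c (Rmax a1 a2))).
  pose proof (Rmax_l M1 M2). pose proof (Rmax_r M1 M2). pose proof (Rmax_l c (Rmax a1 a2)).
  pose proof (Rmax_r c (Rmax a1 a2)). pose proof (Rmax_l a1 a2). pose proof (Rmax_r a1 a2).
  specialize (K1 b ltac:(unfold b; lra) ltac:(unfold b; lra)).
  specialize (K2 b ltac:(unfold b; lra) ltac:(unfold b; lra)).
  rewrite H in K1 by (unfold b; lra). apply Rabs_def2 in K1, K2. apply Rabs_def1; lra.
Qed.

Lemma RS_int_infty_head f G a c L L' : a <= c ->
  RS_int_infty f G a L -> RS_int_infty f G c L' -> RS_int f G a c (L - L').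
Proof.
  intros Hac [Ia [HIa HlimA]] [Ic [HIc HlimC]].
  assert (Hhead : forall b, c <= b -> RS_int f G a c (Ia b - Ic b))
    by (intros b Hb; apply RS_int_head with b; auto; apply HIa; lra).
  assert (Hshift : forall b, b >= c -> Ia b = Ic b + (Ia c - Ic c)).
  { intros b Hb.
    pose proof (RS_int_unique _ _ _ _ _ _ (Hhead b ltac:(lra)) (Hhead c ltac:(lra))). lra. }
  pose proof (limit_at_infty_shift Ia Ic a c c L L' _ HlimA HlimC Hshift).
  replace (L - L') with (Ia c - Ic c) by lra. apply Hhead; lra.
Qed.

Lemma continuity_pt_eps f x0 eps : continuity_pt f x0 -> eps > 0 ->
  exists d, d > 0 /\ forall x, Rabs (x - x0) < d -> Rabs (f x - f x0) < eps.
Proof.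
  intros H He. destruct (H eps He) as [d [Hd K]]. exists d; split; [assumption|].
  intros x Hx. destruct (Req_dec x x0) as [->|Hne].
  - rewrite Rminus_diag, Rabs_R0; assumption.
  - apply (K x). split; [split; [exact I | auto] | exact Hx].
Qed.

Lemma continuity_uniform_on_segment f a b eps : (forall x, continuity_pt f x) -> eps > 0 ->
  exists delta, delta > 0 /\ forall x y, a <= x <= b -> a <= y <= b ->
    Rabs (x - y) < delta -> Rabs (f x - f y) < eps.
Proof.
  intros Hc He.
  destruct (Heine f _ (compact_P3 a b) (fun x _ => Hc x) (mkposreal eps He))
    as [[delta Hdelta] Hu].
  exists delta; split; [assumption|]. intros x y Hx Hy Hxy. exact (Hu x y Hx Hy Hxy).
Qed.

Lemma glb_exists (E : R -> Prop) :
  (exists x, E x) -> (exists m, forall x, E x -> m <= x) -> exists g, is_glb E g.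
Proof.
  intros [x0 Hx0] [m Hm].
  destruct (completeness (fun y => E (- y))) as [s [Hub Hleast]].
  - exists (- m). intros y Hy. specialize (Hm _ Hy). lra.
  - exists (- x0). rewrite Ropp_involutive. exact Hx0.
  - exists (- s). split.
    + intros x Hx. assert (Hx' : E (- - x)) by (rewrite Ropp_involutive; exact Hx).
      specialize (Hub _ Hx'). lra.
    + intros b Hb. assert (s <= - b); [|lra]. apply Hleast.
      intros y Hy. specialize (Hb _ Hy). lra.
Qed.

Lemma tagged_partition_map g a b n x :
  tagged_partition a b n x (fun i => x (S i)) ->
  (forall i, (i < n)%nat -> g (x i) < g (x (S i))) ->
  tagged_partition (g a) (g b) n (fun i => g (x i)) (fun i => g (x (S i))).
Proof.
  intros [Hx0 [Hxn _]] Hinc. rewrite <- Hx0, <- Hxn.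
  split; [reflexivity | split; [reflexivity |]].
  split; intros i Hi; specialize (Hinc i Hi); lra.
Qed.

Section Cdf.
Variable F : R -> R.
Hypothesis HF : cont_cdf_nonneg F.

Lemma cdf_nonneg x : 0 <= F x.
Proof.
  destruct HF as [Hmono [_ [Hneg _]]].
  rewrite <- (Hneg (Rmin x (-1))) by (pose proof (Rmin_r x (-1)); lra).
  apply Hmono, Rmin_l.
Qed.

Lemma cdf_le_1 x : F x <= 1.
Proof.
  destruct HF as [Hmono [_ [_ Hlim]]]. destruct (Rle_lt_dec (F x) 1) as [|Hgt]; [assumption|].
  destruct (Hlim (F x - 1)) as [M HM]; [lra|].
  specialize (HM (Rmax M x) (Rle_ge _ _ (Rmax_l M x))).
  pose proof (Hmono x (Rmax M x) (Rmax_r M x)). apply Rabs_def2 in HM. lra.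
Qed.

Lemma cdf_at_0 : F 0 = 0.
Proof.
  destruct HF as [_ [Hcont [Hneg _]]]. pose proof (cdf_nonneg 0).
  destruct (Req_dec (F 0) 0) as [|Hne]; [assumption|].
  destruct (continuity_pt_eps F 0 (F 0) (Hcont 0)) as [d [Hd K]]; [lra|].
  specialize (K (- d / 2)). rewrite Hneg in K by lra.
  rewrite Rabs_left in K by lra. rewrite Rabs_left in K by lra.
  specialize (K ltac:(lra)). lra.
Qed.

Lemma cdf_const_integral f c d :
  0 <= c <= d -> F d = F c -> RS_int f F c d 0.
Proof.
  intros Hcd Hdc. destruct HF as [Hmono _].
  apply RS_int_const_integrator; [lra|]. intros y Hy.
  pose proof (Hmono _ _ (proj1 Hy)). pose proof (Hmono _ _ (proj2 Hy)). lra.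
Qed.

Lemma quantile_exists : exists Q, is_quantile F Q.
Proof.
  destruct HF as [_ [_ [Hneg Hlim]]].
  assert (Hglb : forall t, exists g, 0 < t < 1 -> is_glb (fun x => t <= F x) g).
  { intro t. destruct (Rlt_dec 0 t) as [Ht0|]; [|exists 0; intros; lra].
    destruct (Rlt_dec t 1) as [Ht1|]; [|exists 0; intros; lra].
    destruct (glb_exists (fun x => t <= F x)) as [g Hg].
    - destruct (Hlim (1 - t)) as [M HM]; [lra|].
      exists M. specialize (HM M (Rge_refl M)). apply Rabs_def2 in HM. lra.
    - exists 0. intros x Hx. destruct (Rle_lt_dec 0 x) as [|Hx0]; [assumption|].
      rewrite Hneg in Hx by assumption. lra.
    - exists g; intros; exact Hg. }
  exists (fun t => proj1_sig (constructive_indefinite_description _ (Hglb t))).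
  intros t Ht. exact (proj2_sig (constructive_indefinite_description _ (Hglb t)) Ht).
Qed.

Lemma cdf_zero_set_sup tau : 0 < F tau ->
  exists a, 0 <= a < tau /\ F a = 0 /\ forall x, a < x -> 0 < F x.
Proof.
  intros Htau. destruct HF as [Hmono [Hcont _]].
  assert (Htau0 : 0 < tau).
  { destruct (Rlt_le_dec 0 tau) as [|Hle]; [assumption|].
    pose proof (Hmono _ _ Hle). rewrite cdf_at_0 in *. lra. }
  set (E := fun x => x <= tau /\ F x = 0).
  assert (Hbound : bound E) by (exists tau; intros x [Hx _]; assumption).
  assert (Hne : exists x, E x) by (exists 0; split; [lra | apply cdf_at_0]).
  destruct (completeness E Hbound Hne) as [a [Hub Hleast]].
  assert (Ha0 : 0 <= a) by (apply Hub; split; [lra | apply cdf_at_0]).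
  assert (Hat : a <= tau) by (apply Hleast; intros x [Hx _]; assumption).
  assert (HFa : F a = 0).
  { pose proof (cdf_nonneg a). destruct (Req_dec (F a) 0) as [|HFa0]; [assumption|].
    destruct (continuity_pt_eps F a (F a) (Hcont a)) as [d [Hd K]]; [lra|].
    assert (a <= a - d); [|lra]. apply Hleast. intros x [Hx Hx0].
    destruct (Rle_lt_dec x (a - d)) as [|Hlt]; [assumption|].
    assert (x <= a) by (apply Hub; split; assumption).
    specialize (K x ltac:(apply Rabs_def1; lra)). rewrite Hx0 in K.
    apply Rabs_def2 in K. lra. }
  assert (Hpos : forall x, a < x -> 0 < F x).
  { intros x Hx. pose proof (cdf_nonneg x).
    destruct (Req_dec (F x) 0) as [Hx0|]; [|lra].
    destruct (Rle_lt_dec x tau).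
    - assert (x <= a) by (apply Hub; split; assumption). lra.
    - pose proof (Hmono tau x ltac:(lra)). lra. }
  exists a. split; [split; [assumption|] | split; assumption].
  destruct (Req_dec a tau) as [->|]; lra.
Qed.

Variable Q : R -> R.
Hypothesis HQ : is_quantile F Q.

Lemma quantile_pos t : 0 < t < 1 -> 0 < Q t.
Proof.
  intros Ht. destruct HF as [_ [Hcont [Hneg _]]].
  destruct (continuity_pt_eps F 0 t (Hcont 0)) as [d [Hd K]]; [lra|].
  destruct (HQ t Ht) as [_ Hgreatest]. assert (d <= Q t); [|lra].
  apply Hgreatest. intros x Hx. destruct (Rle_lt_dec d x) as [|Hxd]; [assumption|].
  destruct (Rlt_le_dec x 0) as [Hx0|Hx0]; [rewrite Hneg in Hx by assumption; lra|].
  specialize (K x). rewrite cdf_at_0, !Rminus_0_r in K.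
  pose proof (cdf_nonneg x). rewrite (Rabs_pos_eq x), (Rabs_pos_eq (F x)) in K by lra.
  specialize (K Hxd). lra.
Qed.

Lemma quantile_le t t' : 0 < t -> t <= t' -> t' < 1 -> Q t <= Q t'.
Proof.
  intros Ht Htt' Ht'. destruct (HQ t ltac:(lra)) as [Hlow _].
  destruct (HQ t' ltac:(lra)) as [_ Hgreatest].
  apply Hgreatest. intros x Hx. apply Hlow. lra.
Qed.

Lemma quantile_integral_strict_mono p1 p2 K1 K2 : 0 < p2 -> p2 < p1 -> p1 < 1 ->
  RS_int Q (fun t => t) 0 p2 K2 -> RS_int Q (fun t => t) 0 p1 K1 -> K2 < K1.
Proof.
  intros Hp2 Hp21 Hp1 HK2 HK1.
  pose proof (RS_int_tail _ _ _ _ _ _ _ (Rlt_le _ _ Hp21) HK1 HK2) as Hdiff.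
  assert (Hbound : Q p2 * (p1 - p2) <= K1 - K2).
  { apply (RS_int_lower_bound _ _ _ _ _ _ Hdiff); [intros; assumption|].
    intros t Ht. apply quantile_le; lra. }
  pose proof (quantile_pos p2 ltac:(lra)).
  assert (0 < Q p2 * (p1 - p2)) by (apply Rmult_lt_0_compat; lra). lra.
Qed.

Lemma cdf_head_integral f mu th v :
  RS_int_infty f F 0 mu -> RS_int_infty f F th v -> v <> mu -> RS_int f F 0 th (mu - v).
Proof.
  intros Hmu Hv Hne. destruct (Rlt_le_dec th 0) as [Hth|Hth].
  - exfalso.
    pose proof (RS_int_infty_head _ _ _ _ _ _ (Rlt_le _ _ Hth) Hv Hmu) as Hhead.
    assert (Hzero : RS_int f F th 0 0).
    { destruct HF as [_ [_ [Hneg _]]].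
      apply RS_int_const_integrator; [lra|]. intros y Hy. rewrite (Hneg th Hth).
      destruct (Req_dec y 0) as [->|]; [apply cdf_at_0 | apply Hneg; lra]. }
    apply Hne. pose proof (RS_int_unique _ _ _ _ _ _ Hhead Hzero). lra.
  - exact (RS_int_infty_head _ _ _ _ _ _ Hth Hmu Hv).
Qed.

Lemma Lorenz_level_le mu LC1 LC2 p1 p2 v :
  (forall p, 0 <= p < 1 -> RS_int Q (fun t => t) 0 p (mu * LC2 p)) -> mu > 0 ->
  (forall p, 0 <= p <= 1 -> LC1 p >= LC2 p) -> 0 < p1 < 1 -> 0 < p2 < 1 ->
  mu * LC1 p1 = v -> mu * LC2 p2 = v -> p1 <= p2.
Proof.
  intros HL Hmu Hdom Hp1 Hp2 E1 E2. destruct (Rle_lt_dec p1 p2) as [|Hlt]; [assumption|].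
  pose proof (quantile_integral_strict_mono p1 p2 _ _ ltac:(lra) Hlt ltac:(lra)
                (HL p2 ltac:(lra)) (HL p1 ltac:(lra))).
  pose proof (Hdom p1 ltac:(lra)).
  assert (mu * LC2 p1 <= mu * LC1 p1) by (apply Rmult_le_compat_l; lra). lra.
Qed.

Hypothesis HS : strict_incr_on_interior F.

Lemma quantile_cdf x : 0 < F x < 1 -> Q (F x) = x.
Proof.
  intros Hx. destruct (HQ (F x) Hx) as [Hlow Hgreatest]. apply Rle_antisym.
  - apply Hlow; lra.
  - apply Hgreatest. intros y Hy. destruct (Rle_lt_dec x y) as [|Hyx]; [assumption|].
    destruct HF as [Hmono _]. pose proof (Hmono y x (Rlt_le _ _ Hyx)).
    assert (F y < F x) by (apply HS; [assumption | split | ]; lra). lra.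
Qed.

(* Riemann sums for x dF over [0,tau] coincide with Riemann sums for F^{-1}(t) dt
   over the image partition of [0, F tau]; F is constant on [0,a], and strictly
   increasing and uniformly continuous on [a,tau]. *)
Lemma quantile_sums_match tau d d' : 0 < F tau < 1 -> d > 0 -> d' > 0 ->
  exists n t eta n' x xi,
    tagged_partition 0 (F tau) n t eta /\ mesh_lt n t d /\
    tagged_partition 0 tau n' x xi /\ mesh_lt n' x d' /\
    RS_sum Q (fun t => t) n t eta = RS_sum (fun x => x) F n' x xi.
Proof.
  intros Htau Hd Hd'. pose proof HF as [Hmono [Hcont _]].
  destruct (cdf_zero_set_sup tau (proj1 Htau)) as [a [[Ha0 Hat] [HFa Hpos]]].
  destruct (continuity_uniform_on_segment F a tau d Hcont Hd) as [dF [HdF Hunif]].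
  destruct (fine_partition a tau _ (Rlt_le _ _ Hat) (Rmin_pos _ _ Hd' HdF))
    as [n [x [P M]]].
  destruct (fine_partition 0 a d' Ha0 Hd') as [n0 [x0 [P0 M0]]].
  destruct (concat_partition (fun x => x) F _ _ _ _ _ _ _ _ _ _ P0 P M0
              (mesh_lt_le _ _ _ _ M (Rmin_l _ _))) as [PC [MC EC]].
  pose proof (partition_bounds _ _ _ _ _ P) as Hx.
  pose proof (partition_increasing _ _ _ _ _ P) as Hxinc.
  assert (Hinterior : forall j, (j < n)%nat -> 0 < F (x (S j)) < 1).
  { intros j Hj. pose proof P as [Hx0 _].
    pose proof (Hxinc 0%nat (S j) ltac:(lia) ltac:(lia)).
    pose proof (Hmono _ _ (proj2 (Hx (S j) ltac:(lia)))).
    split; [apply Hpos | ]; lra. }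
  assert (Hinc : forall j, (j < n)%nat -> F (x j) < F (x (S j))).
  { intros j Hj. pose proof (Hinterior j Hj). pose proof (cdf_nonneg (x j)).
    destruct (Req_dec (F (x j)) 0) as [->|Hne]; [lra|].
    pose proof (Hmono _ _ (proj2 (Hx j ltac:(lia)))).
    apply HS; [apply Hxinc; lia | split | ]; lra. }
  exists n, (fun j => F (x j)), (fun j => F (x (S j))), (n0 + n)%nat,
    (concat_seq n0 x0 x), (concat_seq n0 (fun i => x0 (S i)) (fun i => x (S i))).
  split; [rewrite <- HFa; exact (tagged_partition_map F _ _ _ _ P Hinc)|].
  split.
  { intros j Hj. pose proof (Hinc j Hj). pose proof (M j Hj). pose proof (Rmin_r d' dF).
    pose proof (Hxinc j (S j) ltac:(lia) ltac:(lia)).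
    specialize (Hunif (x (S j)) (x j) (Hx (S j) ltac:(lia)) (Hx j ltac:(lia))).
    rewrite !Rabs_pos_eq in Hunif by lra. apply Hunif. lra. }
  split; [exact PC|]. split; [exact MC|].
  rewrite EC, (RS_sum_const_integrator _ F 0 a _ _ _ P0).
  - rewrite Rplus_0_l. unfold RS_sum. apply sum_upto_ext. intros j Hj.
    rewrite quantile_cdf by (apply Hinterior; assumption). reflexivity.
  - intros y Hy. rewrite cdf_at_0.
    pose proof (Hmono _ _ (proj2 Hy)). pose proof (cdf_nonneg y). lra.
Qed.

Lemma quantile_integral_change_of_variables tau K J : 0 < F tau < 1 ->
  RS_int Q (fun t => t) 0 (F tau) K -> RS_int (fun x => x) F 0 tau J -> K = J.
Proof.
  intros Htau HK HJ. apply (RS_int_eq_of_matching_sums _ _ _ _ _ _ _ _ _ _ HK HJ).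
  intros d d' Hd Hd'. apply quantile_sums_match; assumption.
Qed.

Lemma Lorenz_level mu LC tau v :
  (forall p, 0 <= p < 1 -> RS_int Q (fun t => t) 0 p (mu * LC p)) ->
  RS_int_infty (fun x => x) F 0 mu -> RS_int (fun x => x) F 0 tau v -> 0 < v < mu ->
  0 < F tau < 1 /\ mu * LC (F tau) = v.
Proof.
  intros HL Hmu Hv Hvmu. pose proof (proj1 Hv) as Htau.
  pose proof HF as [Hmono _].
  assert (HF0 : F tau <> 0).
  { intros Hz.
    assert (Hzero : RS_int (fun x => x) F 0 tau 0)
      by (apply cdf_const_integral; [lra | rewrite Hz, cdf_at_0; reflexivity]).
    pose proof (RS_int_unique _ _ _ _ _ _ Hv Hzero). lra. }
  assert (HF1 : F tau <> 1).
  { intros Hone.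
    assert (Htail : RS_int_infty (fun x => x) F tau 0).
    { exists (fun _ => 0). split.
      - intros b Hb. apply cdf_const_integral; [lra|].
        pose proof (cdf_le_1 b). pose proof (Hmono _ _ Hb). lra.
      - intros eps He; exists 0; intros. rewrite Rminus_0_r, Rabs_R0; assumption. }
    pose proof (RS_int_infty_head _ _ _ _ _ _ Htau Hmu Htail) as Hhead.
    pose proof (RS_int_unique _ _ _ _ _ _ Hv Hhead). lra. }
  pose proof (cdf_nonneg tau). pose proof (cdf_le_1 tau).
  assert (Hin : 0 < F tau < 1) by lra.
  split; [exact Hin|].
  apply (quantile_integral_change_of_variables tau); [exact Hin | apply HL; lra | exact Hv].
Qed.

End Cdf.

Theorem mainTheorem3 :
  forall (F1 F2 : R -> R) (mu : R) (LC1 LC2 : R -> R),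
    cont_cdf_nonneg F1 -> cont_cdf_nonneg F2 ->
    strict_incr_on_interior F1 -> strict_incr_on_interior F2 ->
    mu > 0 ->
    RS_int_infty (fun x => x) F1 0 mu ->
    RS_int_infty (fun x => x) F2 0 mu ->
    is_Lorenz_curve F1 mu LC1 -> is_Lorenz_curve F2 mu LC2 ->
    (forall p, 0 <= p <= 1 -> LC1 p >= LC2 p) ->
    forall (m r tau1 tau2 theta1 theta2 : R),
      m > 1 -> 0 < r -> r < m * mu ->
      RS_int (fun x => x) F1 0 tau1 (r / m) ->
      RS_int (fun x => x) F2 0 tau2 (r / m) ->
      RS_int_infty (fun x => x) F1 theta1 (r / m) ->
      RS_int_infty (fun x => x) F2 theta2 (r / m) ->
      (F1 tau1 <= F2 tau2 /\ 1 - F1 theta1 >= 1 - F2 theta2) /\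
      (/ m < 1 - F2 theta2 -> / m < 1 - F1 theta1) /\
      (/ m > F2 tau2 -> / m > F1 tau1).
Proof.
  intros F1 F2 mu LC1 LC2 HF1 HF2 HS1 HS2 Hmu HI1 HI2 HL1 HL2 Hdom
    m r tau1 tau2 th1 th2 Hm Hr Hrm Htau1 Htau2 Hth1 Hth2.
  destruct (quantile_exists F1 HF1) as [Q1 HQ1].
  destruct (quantile_exists F2 HF2) as [Q2 HQ2].
  destruct (HL1 Q1 HQ1) as [L1 _]. destruct (HL2 Q2 HQ2) as [L2 _].
  assert (Hv : 0 < r / m < mu).
  { split; [apply Rdiv_lt_0_compat; lra|].
    apply Rmult_lt_reg_r with m; [lra|]. unfold Rdiv; rewrite Rmult_assoc, Rinv_l; lra. }
  assert (Hv' : 0 < mu - r / m < mu) by lra.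
  pose proof (cdf_head_integral F1 HF1 _ _ _ _ HI1 Hth1 ltac:(lra)) as Hhead1.
  pose proof (cdf_head_integral F2 HF2 _ _ _ _ HI2 Hth2 ltac:(lra)) as Hhead2.
  destruct (Lorenz_level F1 HF1 Q1 HQ1 HS1 _ _ _ _ L1 HI1 Htau1 Hv) as [A1 B1].
  destruct (Lorenz_level F2 HF2 Q2 HQ2 HS2 _ _ _ _ L2 HI2 Htau2 Hv) as [A2 B2].
  destruct (Lorenz_level F1 HF1 Q1 HQ1 HS1 _ _ _ _ L1 HI1 Hhead1 Hv') as [C1 D1].
  destruct (Lorenz_level F2 HF2 Q2 HQ2 HS2 _ _ _ _ L2 HI2 Hhead2 Hv') as [C2 D2].
  pose proof (Lorenz_level_le F2 HF2 Q2 HQ2 _ _ _ _ _ _ L2 Hmu Hdom A1 A2 B1 B2).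
  pose proof (Lorenz_level_le F2 HF2 Q2 HQ2 _ _ _ _ _ _ L2 Hmu Hdom C1 C2 D1 D2).
  lra.
Qed.
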